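(* Let $\mathfrak a$ be a finite-dimensional real Euclidean vector space, let $\Delta\subset\mathfrak a^*$ be a reduced root system (i.e. $2\alpha\notin\Delta$ for all $\alpha\in\Delta$) with a chosen set of positive roots $\Delta^+$, and let $m:\Delta\to\mathbb R$, $\alpha\mapsto m_\alpha$, be a Weyl-group-invariant multiplicity function such that $m_\alpha\in 2\mathbb N$ for all $\alpha\in\Delta$. Put $\rho:=\frac12\sum_{\alpha\in\Delta^+}m_\alpha\alpha$ and $\rho_\alpha:=\langle\rho,\alpha\rangle/\langle\alpha,\alpha\rangle$. Then $\rho_\alpha\ge m_\alpha/2$ for every $\alpha\in\Delta^+$.
   Context: $\langle\cdot,\cdot\rangle$ denotes the inner product of $\mathfrak a$ transferred to $\mathfrak a^*$. *)

From HB Require Import structures.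
From mathcomp Require Import all_boot all_order all_algebra.
From mathcomp Require Import reals.
Set Implicit Arguments. Unset Strict Implicit. Unset Printing Implicit Defensive.
Import Order.TTheory GRing.Theory Num.Theory.
Local Open Scope ring_scope.

(* The Euclidean space a^* is modelled as R^n = 'rV[R]_n with the standard
   inner product (every finite-dimensional real Euclidean space is isometric
   to such a space). *)
Definition dotp (R : realType) (n : nat) (u v : 'rV[R]_n) : R := (u *m v^T) 0 0.

Definition refl (R : realType) (n : nat) (a b : 'rV[R]_n) : 'rV[R]_n :=
  b - (2 * dotp b a / dotp a a) *: a.

Definition root_system (R : realType) (n : nat) (D : seq 'rV[R]_n) : Prop :=
  [/\ uniq D,
      (0 : 'rV[R]_n) \notin D,
      (<<D>>%VS == fullv),
      (forall a b, a \in D -> b \in D -> refl a b \in D) &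
      (forall a b, a \in D -> b \in D ->
         exists k : int, 2 * dotp b a / dotp a a = k%:~R)].

Definition reduced_rs (R : realType) (n : nat) (D : seq 'rV[R]_n) : Prop :=
  forall a, a \in D -> 2%:R *: a \notin D.

(* A choice of positive roots: those positive on a regular vector v. *)
Definition regular_for (R : realType) (n : nat) (D : seq 'rV[R]_n) (v : 'rV[R]_n) : Prop :=
  forall a, a \in D -> dotp v a != 0.

Definition pos_roots (R : realType) (n : nat) (D : seq 'rV[R]_n) (v : 'rV[R]_n) :
  seq 'rV[R]_n := [seq a <- D | 0 < dotp v a].

(* Weyl-group invariance (W is generated by the reflections s_a, a in D). *)
Definition weyl_invariant (R : realType) (n : nat) (D : seq 'rV[R]_n) (m : 'rV[R]_n -> R) : Prop :=
  forall a b, a \in D -> b \in D -> m (refl a b) = m b.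

Definition rho (R : realType) (n : nat) (D : seq 'rV[R]_n) (v : 'rV[R]_n) (m : 'rV[R]_n -> R) :
  'rV[R]_n := 2^-1 *: \sum_(a <- pos_roots D v) m a *: a.

From HB Require Import structures.
From mathcomp Require Import all_boot all_order all_algebra.
From mathcomp Require Import reals ring lra.
Set Implicit Arguments. Unset Strict Implicit. Unset Printing Implicit Defensive.
Import Order.TTheory GRing.Theory Num.Theory.
Local Open Scope ring_scope.

(* The reflection s_a permutes the positive roots b whose image s_a b is again
   positive, and reverses the sign of <b, a>; Weyl invariance of m makes their
   contributions m_b <b, a> to 2 <rho, a> cancel in pairs.  Every remaining
   positive root b has s_a b negative, which forces <b, a> > 0; among them is a
   itself (s_a a = -a), so 2 <rho, a> >= m_a <a, a>. *)

Section InvolutionSum.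
Variables (V : numDomainType) (T : eqType).

Lemma big_involution_oppr (r : seq T) (g : T -> T) (f : T -> V) :
  uniq r -> involutive g -> {in r, forall x, g x \in r} ->
  {in r, forall x, f (g x) = - f x} ->
  \sum_(x <- r) f x = 0.
Proof.
move=> uniq_r gK r_g f_g.
have perm_rg : perm_eq r (map g r).
  apply: uniq_perm => //; first by rewrite (map_inj_uniq (inv_inj gK)).
  move=> x; apply/idP/mapP => [xr | [y yr ->]]; last exact: r_g.
  by exists (g x); rewrite ?gK ?r_g.
have : \sum_(x <- r) f x = - \sum_(x <- r) f x.
  by rewrite {1}(perm_big _ perm_rg) big_map -sumrN big_seq [RHS]big_seq; exact: eq_bigr.
by move/eqP; rewrite -subr_eq0 opprK -mulr2n mulrn_eq0 => /eqP.
Qed.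

End InvolutionSum.

Section InnerProduct.
Variables (R : realType) (n : nat).
Implicit Types (a b u w x : 'rV[R]_n).

Lemma dotpE u w : dotp u w = \sum_j u 0 j * w 0 j.
Proof. by rewrite /dotp mxE; apply: eq_bigr => j _; rewrite mxE. Qed.

Lemma dotpC u w : dotp u w = dotp w u.
Proof. by rewrite !dotpE; apply: eq_bigr => j _; rewrite mulrC. Qed.

Lemma dotpBl u w x : dotp (u - w) x = dotp u x - dotp w x.
Proof. by rewrite /dotp mulmxBl !mxE. Qed.

Lemma dotpZl k u x : dotp (k *: u) x = k * dotp u x.
Proof. by rewrite /dotp -scalemxAl mxE. Qed.

Lemma dotp_suml (I : Type) (r : seq I) (F : I -> 'rV[R]_n) x :
  dotp (\sum_(i <- r) F i) x = \sum_(i <- r) dotp (F i) x.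
Proof. by rewrite /dotp mulmx_suml summxE. Qed.

Lemma dotpp_gt0 u : u != 0 -> 0 < dotp u u.
Proof.
have sq_ge0 j : 0 <= u 0 j * u 0 j by rewrite -expr2 sqr_ge0.
move=> u_neq0; rewrite dotpE lt_def sumr_ge0 ?andbT //.
apply: contra u_neq0; rewrite psumr_eq0 // => /allP u_eq0.
apply/eqP/rowP => j; rewrite mxE; apply/eqP.
by have := u_eq0 j (mem_index_enum j); rewrite /= mulf_eq0 orbb.
Qed.

Lemma refl_dotpl a b : dotp a a != 0 -> dotp (refl a b) a = - dotp b a.
Proof. by move=> a_neq0; rewrite /refl dotpBl dotpZl divfK //; ring. Qed.

Lemma reflK a : dotp a a != 0 -> involutive (refl a).
Proof.
move=> a_neq0 b; rewrite {1}/refl refl_dotpl // mulrN mulNr scaleNr opprK.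
by rewrite /refl subrK.
Qed.

Lemma refl_id a : dotp a a != 0 -> refl a a = - a.
Proof. by move=> a_neq0; rewrite /refl mulfK // scaler_nat mulr2n opprD addNKr. Qed.

Lemma dotp_refl u a b :
  dotp u (refl a b) = dotp u b - 2 * dotp b a / dotp a a * dotp u a.
Proof. by rewrite dotpC /refl dotpBl dotpZl ![dotp _ u]dotpC. Qed.

End InnerProduct.

Section PositiveRoot.
Variables (R : realType) (n : nat) (D : seq 'rV[R]_n) (v : 'rV[R]_n).
Variables (m : 'rV[R]_n -> R) (a : 'rV[R]_n).
Hypotheses (uniq_D : uniq D) (D_neq0 : (0 : 'rV[R]_n) \notin D).
Hypothesis reflD : forall a b, a \in D -> b \in D -> refl a b \in D.
Hypothesis m_refl : weyl_invariant D m.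
Hypothesis m_ge0 : forall b, b \in D -> 0 <= m b.
Hypothesis a_pos : a \in pos_roots D v.

Let va_gt0 : 0 < dotp v a. Proof. by move: a_pos; rewrite mem_filter => /andP[]. Qed.
Let aD : a \in D. Proof. by move: a_pos; rewrite mem_filter => /andP[]. Qed.
Let aa_gt0 : 0 < dotp a a.
Proof. by apply: dotpp_gt0; apply: contraNneq D_neq0 => <-. Qed.
Let aa_neq0 : dotp a a != 0. Proof. by rewrite gt_eqF. Qed.

Local Notation s := (refl a).
Local Notation reflected_pos b := (0 < dotp v (s b)).

Lemma sum_pos_roots_reflected_pos :
  \sum_(b <- pos_roots D v | reflected_pos b) m b * dotp b a = 0.
Proof.
rewrite -big_filter; apply: (big_involution_oppr (g := s)).
- by rewrite !filter_uniq.
- exact: reflK.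
- move=> b; rewrite !mem_filter => /and3P[vsb vb bD].
  by rewrite reflK // vb vsb reflD.
- move=> b; rewrite !mem_filter => /and3P[_ _ bD].
  by rewrite m_refl // refl_dotpl // mulrN.
Qed.

Lemma dotp_ge0_reflected_neg b :
  0 < dotp v b -> ~~ reflected_pos b -> 0 <= dotp b a.
Proof.
move=> vb; rewrite -leNgt dotp_refl subr_le0 => vb_le.
have : 0 < 2 * dotp b a / dotp a a * dotp v a by apply: lt_le_trans vb_le.
by rewrite pmulr_lgt0 // pmulr_lgt0 ?invr_gt0 // pmulr_rgt0 // => /ltW.
Qed.

Lemma sum_pos_roots_reflected_neg :
  m a * dotp a a <=
  \sum_(b <- pos_roots D v | ~~ reflected_pos b) m b * dotp b a.
Proof.
have a_neg : a \in [seq b <- pos_roots D v | ~~ reflected_pos b].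
  rewrite mem_filter a_pos andbT refl_id // dotpC -scaleN1r dotpZl [dotp a v]dotpC.
  by rewrite -leNgt mulN1r oppr_le0 ltW.
rewrite -big_filter (bigD1_seq a a_neg) ?filter_uniq //= lerDl.
rewrite big_seq_cond; apply: sumr_ge0 => b /andP[].
rewrite !mem_filter => /and3P[sb_neg vb bD] _.
by rewrite mulr_ge0 ?m_ge0 ?dotp_ge0_reflected_neg.
Qed.

Lemma half_mult_le_rho_coord : m a / 2 <= dotp (rho D v m) a / dotp a a.
Proof.
have -> : dotp (rho D v m) a = 2^-1 * \sum_(b <- pos_roots D v) m b * dotp b a.
  by rewrite /rho dotpZl dotp_suml; congr (_ * _); apply: eq_bigr => b _; rewrite dotpZl.
rewrite (bigID (fun b => reflected_pos b)) /= sum_pos_roots_reflected_pos add0r.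
have := sum_pos_roots_reflected_neg; rewrite ler_pdivlMr //; lra.
Qed.

End PositiveRoot.

Theorem lemma1p1 (R : realType) (n : nat) (D : seq 'rV[R]_n) (v : 'rV[R]_n)
  (m : 'rV[R]_n -> R) :
  root_system D -> reduced_rs D -> regular_for D v ->
  weyl_invariant D m ->
  (forall a, a \in D -> exists k : nat, m a = (2 * k)%:R) ->
  forall a, a \in pos_roots D v ->
    m a / 2 <= dotp (rho D v m) a / dotp a a.
Proof.
move=> [uniq_D D_neq0 _ reflD _] _ _ m_refl m_even a a_pos.
have m_ge0 b : b \in D -> 0 <= m b by move=> /m_even[k ->]; rewrite ler0n.
exact: half_mult_le_rho_coord uniq_D D_neq0 reflD m_refl m_ge0 a_pos.
Qed.
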